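(* Let $A\in\mathbb{C}^{2n\times 2n}$ be a normal per-Hermitian matrix all of whose eigenvalues have nonzero imaginary parts. Then there exist a unitary perplectic matrix $U\in\mathbb{C}^{2n\times 2n}$ and a diagonal matrix $D\in\mathbb{C}^{n\times n}$ such that $$A=U\begin{bmatrix} D & 0\\ 0 & F_nD^HF_n\end{bmatrix}U^H .$$
   Context: For $m\ge1$, $F_m\in\mathbb{R}^{m\times m}$ denotes the flip (exchange) matrix with ones on the antidiagonal and zeros elsewhere. A matrix $A\in\mathbb{C}^{2n\times 2n}$ is per-Hermitian if $(F_{2n}A)^H=F_{2n}A$ and perskew-Hermitian if $(F_{2n}A)^H=-F_{2n}A$. A matrix $Z\in\mathbb{C}^{2n\times 2n}$ is perplectic if $Z^HF_{2n}Z=F_{2n}$; ''unitary perplectic'' means both unitary and perplectic. *)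

(* Complex matrices are modelled over an arbitrary
   numClosedFieldType C (algebraically closed field with conjugation; e.g. algC). *)
From HB Require Import structures.
From mathcomp Require Import all_boot all_order all_algebra.
Set Implicit Arguments. Unset Strict Implicit. Unset Printing Implicit Defensive.
Import Order.TTheory GRing.Theory Num.Theory.
Local Open Scope ring_scope.
Local Open Scope sesquilinear_scope.

Definition flipmx {C : numClosedFieldType} (m : nat) : 'M[C]_m :=
  \matrix_(i < m, j < m) ((i + j)%N == m.-1)%:R.

Definition perhermitian {C : numClosedFieldType} (k : nat) (A : 'M[C]_k) : Prop :=
  (flipmx k *m A) ^t* = flipmx k *m A.

Definition perplectic {C : numClosedFieldType} (k : nat) (Z : 'M[C]_k) : Prop :=
  Z ^t* *m flipmx k *m Z = flipmx k.

From HB Require Import structures.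
From mathcomp Require Import all_boot all_order all_algebra.
From mathcomp Require Import zify.

(* Diagonalise A unitarily as A = P^H diag(d) P.  Since F A F = A^H, the
   unitary G = P F P^H intertwines diag(conj d) with diag(d), so G_kl <> 0
   forces d_l = conj d_k, whose imaginary part has the opposite sign.  Hence G
   anticommutes with the sign matrix of Im d, and taking traces shows that
   exactly n eigenvalues lie in the upper half-plane.  The corresponding rows
   X of P are orthonormal eigenvectors with X F X^H = 0, and the adjoint of
   [X; F_n X F] is then unitary, perplectic and puts A in block form. *)

Set Implicit Arguments.
Unset Strict Implicit.
Unset Printing Implicit Defensive.

Import Order.TTheory GRing.Theory Num.Theory.
Local Open Scope ring_scope.
Local Open Scope sesquilinear_scope.

Section FlipMatrix.
Context {C : numClosedFieldType}.

Lemma trmxC_mul m n p (A : 'M[C]_(m, n)) (B : 'M[C]_(n, p)) :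
  (A *m B)^t* = B^t* *m A^t*.
Proof. by rewrite trmx_mul map_mxM. Qed.

Lemma flipmxE m (i j : 'I_m) : (flipmx m : 'M[C]_m) i j = (j == rev_ord i)%:R.
Proof.
rewrite mxE; suff -> : ((i + j)%N == m.-1) = (j == rev_ord i) by [].
have ltim := ltn_ord i; have ltjm := ltn_ord j.
by apply/eqP/eqP => [ij|->]; [apply: val_inj => /=|rewrite /=]; lia.
Qed.

Lemma flipmxK m : (flipmx m : 'M[C]_m) *m flipmx m = 1%:M.
Proof.
apply/matrixP=> i j; rewrite !mxE (bigD1 (rev_ord i)) //= big1 ?addr0.
  by rewrite !flipmxE eqxx mul1r rev_ordK eq_sym.
by move=> k /negbTE ki; rewrite flipmxE ki mul0r.
Qed.

Lemma trmxC_flipmx m : (flipmx m : 'M[C]_m)^t* = flipmx m.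
Proof. by apply/matrixP=> i j; rewrite !mxE conjC_nat addnC. Qed.

Lemma flipmx_unitary m : (flipmx m : 'M[C]_m) \is unitarymx.
Proof. by apply/unitarymxP; rewrite trmxC_flipmx flipmxK. Qed.

Lemma flipmx_block n :
  (flipmx (n + n) : 'M[C]_(n + n)) = block_mx 0 (flipmx n) (flipmx n) 0.
Proof.
apply/matrixP=> i j; rewrite -(splitK i) -(splitK j).
case: (split i) => a; case: (split j) => b;
  rewrite ?block_mxEul ?block_mxEur ?block_mxEdl ?block_mxEdr !mxE /=;
  have lta := ltn_ord a; have ltb := ltn_ord b;
  by repeat case: eqP => ? //; exfalso; lia.
Qed.

Lemma perhermitian_flipmx m (A : 'M[C]_m) :
  perhermitian A -> flipmx m *m A = A^t* *m flipmx m.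
Proof. by rewrite /perhermitian trmxC_mul trmxC_flipmx => ->. Qed.

End FlipMatrix.

Section SignMatrix.
Context {R : numDomainType}.

Definition sign_mx {m} (S : {set 'I_m}) : 'M[R]_m :=
  diag_mx (\row_k (if k \in S then 1 else -1)).

Lemma sign_mx_anticommute m (S : {set 'I_m}) (G : 'M[R]_m) :
  (forall k l, G k l != 0 -> (k \in S) = (l \notin S)) ->
  G *m sign_mx S = - (sign_mx S *m G).
Proof.
move=> GS; apply/matrixP => k l; rewrite mul_mx_diag mul_diag_mx !mxE.
have [->|/GS ->] := eqVneq (G k l) 0; first by rewrite mul0r mulr0 oppr0.
by case: (l \in S); rewrite /= ?mulrN1 ?mul1r ?mulN1r ?mulr1 ?opprK.
Qed.

Lemma mxtrace_anticommute m (G S : 'M[R]_m) :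
  G \in unitmx -> G *m S = - (S *m G) -> \tr S = 0.
Proof.
move=> Gu GS; have trSN : \tr S = - \tr S.
  rewrite -[in LHS](mulKmx Gu S) GS mulmxN linearN /= mxtrace_mulC.
  by rewrite mulmxK.
by have := mulrn_eq0 (\tr S) 2; rewrite /= mulr2n {2}trSN subrr eqxx => /esym/eqP.
Qed.

Lemma card_sign_mx_trace0 n (S : {set 'I_(n + n)}) :
  \tr (sign_mx S) = 0 -> #|S| = n.
Proof.
rewrite mxtrace_diag (bigID (mem S)) /=.
rewrite (eq_bigr (fun _ => 1)) => [|k kS]; last by rewrite mxE kS.
rewrite [X in _ + X](eq_bigr (fun _ => -1)) => [|k /negbTE kS]; last by rewrite mxE kS.
rewrite !sumr_const mulNrn => /eqP; rewrite subr_eq0 eqr_nat => /eqP eqS.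
have := cardC S; rewrite -eqS card_ord => cardSS.
by apply/eqP; rewrite -(inj_eq double_inj) -!addnn cardSS.
Qed.

End SignMatrix.

Lemma diag_intertwine_eq (R : idomainType) m (G : 'M[R]_m) (d e : 'rV[R]_m) k l :
  diag_mx e *m G = G *m diag_mx d -> G k l != 0 -> e 0 k = d 0 l.
Proof.
move=> /matrixP/(_ k l); rewrite mul_diag_mx mul_mx_diag !mxE mulrC => eqG Gkl.
exact: mulfI Gkl _ _ eqG.
Qed.

Lemma rowsub_diag_mul (R : pzSemiRingType) m m' n (f : 'I_m' -> 'I_m)
    (d : 'rV[R]_m) (M : 'M[R]_(m, n)) :
  rowsub f (diag_mx d *m M) = diag_mx (colsub f d) *m rowsub f M.
Proof. by apply/matrixP=> i j; rewrite !mul_diag_mx !mxE. Qed.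

Section RowSubmatrix.
Context {C : numClosedFieldType}.

Lemma mul_rowsub_adj m m' n p q (f : 'I_m' -> 'I_m) (g : 'I_p -> 'I_n)
    (M : 'M[C]_(m, q)) (N : 'M[C]_(n, q)) :
  rowsub f M *m (rowsub g N)^t* = mxsub f g (M *m N^t*).
Proof. by apply/matrixP=> i j; rewrite !mxE; apply: eq_bigr => k _; rewrite !mxE. Qed.

Lemma rowsub_unitarymx m m' n (f : 'I_m' -> 'I_m) (M : 'M[C]_(m, n)) :
  injective f -> M \is unitarymx -> rowsub f M \is unitarymx.
Proof.
move=> f_inj /unitarymxP MMt; apply/unitarymxP; rewrite mul_rowsub_adj MMt.
by apply/matrixP=> i j; rewrite !mxE (inj_eq f_inj).
Qed.

End RowSubmatrix.

Section NormalSpectral.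
Context {C : numClosedFieldType} {m : nat} {A : 'M[C]_m}.
Hypothesis normalA : A \is normalmx.
Local Notation P := (spectralmx A).
Local Notation d := (spectral_diag A).

Let spectralE : A = P^t* *m diag_mx d *m P.
Proof.
by have /orthomx_spectralP eqA := normalA; rewrite -invmx_unitary ?spectral_unitarymx.
Qed.

Let spectral_unitary : P *m P^t* = 1%:M.
Proof. exact/unitarymxP/spectral_unitarymx. Qed.

Lemma spectral_mulmx : P *m A = diag_mx d *m P.
Proof. by rewrite [X in P *m X]spectralE !mulmxA spectral_unitary mul1mx. Qed.

Lemma spectral_mulmx_adj : P *m A^t* = diag_mx (map_mx Num.conj d) *m P.
Proof.
rewrite [X in P *m X^t*]spectralE !trmxC_mul trmxCK tr_diag_mx map_diag_mx.
by rewrite !mulmxA spectral_unitary mul1mx.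
Qed.

Lemma mulmx_spectral_adj : A *m P^t* = P^t* *m diag_mx d.
Proof. by rewrite [X in X *m _ = _]spectralE -!mulmxA spectral_unitary mulmx1. Qed.

Lemma spectral_diag_eigenvalue k : eigenvalue A (d 0 k).
Proof.
apply/eigenvalueP; exists (row k P).
  by rewrite -row_mul spectral_mulmx row_mul row_diag_mx -scalemxAl -rowE.
apply/eqP => Pk0; move/row_unitarymxP: (spectral_unitarymx A) => /(_ k k).
by rewrite Pk0 dotmxE mul0mx mxE eqxx => /esym/eqP; rewrite oner_eq0.
Qed.

Hypothesis perA : perhermitian A.

Lemma spectral_flip_intertwine :
  diag_mx (map_mx Num.conj d) *m (P *m flipmx m *m P^t*) =
  (P *m flipmx m *m P^t*) *m diag_mx d.
Proof.
rewrite !mulmxA -spectral_mulmx_adj -(mulmxA P) -perhermitian_flipmx //.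
by rewrite -!mulmxA mulmx_spectral_adj.
Qed.

End NormalSpectral.

Section NonrealPerHermitian.
Context {C : numClosedFieldType} {n : nat} {A : 'M[C]_(n + n)}.
Hypotheses (normalA : A \is normalmx) (perA : perhermitian A).
Hypothesis nonrealA : forall a : C, eigenvalue A a -> 'Im a != 0.
Local Notation P := (spectralmx A).
Local Notation d := (spectral_diag A).
Let G := P *m flipmx (n + n) *m P^t*.
Let S := [set k | 0 < 'Im (d 0 k)].

Lemma spectral_flip_support k l : G k l != 0 -> (k \in S) = (l \notin S).
Proof.
move=> /(diag_intertwine_eq (spectral_flip_intertwine normalA perA)).
rewrite mxE !inE => <-; rewrite Im_conj oppr_gt0 -real_leNgt ?real0 ?Creal_Im //.
by rewrite lt_def nonrealA ?spectral_diag_eigenvalue.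
Qed.

Lemma card_posIm_spectral : #|S| = n.
Proof.
apply: (card_sign_mx_trace0 (R := C)); apply: (@mxtrace_anticommute _ _ G).
  apply/unitarymx_unit/mul_unitarymx; last by rewrite trmxC_unitary spectral_unitarymx.
  exact/mul_unitarymx/flipmx_unitary/spectral_unitarymx.
exact/sign_mx_anticommute/spectral_flip_support.
Qed.

Lemma isotropic_eigenrows : exists (X : 'M[C]_(n, n + n)) (D : 'M[C]_n),
  [/\ X \is unitarymx, X *m flipmx (n + n) *m X^t* = 0, is_diag_mx D,
      X *m A = D *m X & X *m A^t* = D^t* *m X].
Proof.
pose f (i : 'I_n) : 'I_(n + n) := enum_val (cast_ord (esym card_posIm_spectral) i).
have fS i : f i \in S := enum_valP _.
have f_inj : injective f by move=> i j /enum_val_inj /cast_ord_inj.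
exists (rowsub f P), (diag_mx (colsub f d)); split.
- exact: rowsub_unitarymx f_inj (spectral_unitarymx A).
- rewrite mul_rowsub_mx mul_rowsub_adj -/G; apply/matrixP => i j.
  rewrite [LHS]mxE [RHS]mxE; apply/eqP; apply: contraT => Gij.
  by have := spectral_flip_support Gij; rewrite !fS.
- exact: diag_mx_is_diag.
- by rewrite mul_rowsub_mx spectral_mulmx // rowsub_diag_mul.
- rewrite mul_rowsub_mx spectral_mulmx_adj // rowsub_diag_mul.
  by rewrite tr_diag_mx map_diag_mx map_mxsub.
Qed.

End NonrealPerHermitian.

Section PerplecticCompletion.
Context {C : numClosedFieldType} {n : nat}.
Variable X : 'M[C]_(n, n + n).
Local Notation F := (flipmx (n + n) : 'M[C]_(n + n)).
Local Notation Fn := (flipmx n : 'M[C]_n).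

Definition perplectic_completion : 'M[C]_(n + n) := col_mx X (Fn *m X *m F).

Let adj_completion : perplectic_completion^t* = row_mx (X^t*) (F *m X^t* *m Fn).
Proof. by rewrite tr_col_mx map_row_mx !trmxC_mul !trmxC_flipmx mulmxA. Qed.

Lemma perplectic_completion_mulmx (A : 'M[C]_(n + n)) (D : 'M[C]_n) :
  perhermitian A -> X *m A = D *m X -> X *m A^t* = D^t* *m X ->
  perplectic_completion *m A =
  block_mx D 0 0 (Fn *m D^t* *m Fn) *m perplectic_completion.
Proof.
move=> perA XA XAt; rewrite mul_col_mx mul_block_col !mul0mx addr0 add0r XA.
rewrite -!mulmxA perhermitian_flipmx // (mulmxA X) XAt.
by rewrite !mulmxA -(mulmxA _ Fn Fn) flipmxK mulmx1.
Qed.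

Hypotheses (unitaryX : X \is unitarymx) (isotropicX : X *m F *m X^t* = 0).

Lemma perplectic_completion_unitary : perplectic_completion \is unitarymx.
Proof.
have XXt := unitarymxP unitaryX.
apply/unitarymxP; rewrite adj_completion mul_col_row scalar_mx_block.
congr block_mx.
- exact: XXt.
- by rewrite !mulmxA isotropicX mul0mx.
- by rewrite -!mulmxA (mulmxA X F) isotropicX mulmx0.
- by rewrite -!mulmxA (mulmxA F F) flipmxK mul1mx (mulmxA X) XXt mul1mx flipmxK.
Qed.

Lemma perplectic_completion_perplectic : perplectic (perplectic_completion^t*).
Proof.
have XXt := unitarymxP unitaryX.
rewrite /perplectic trmxCK adj_completion mul_col_mx mul_col_row [RHS]flipmx_block.
congr block_mx.
- exact: isotropicX.
- by rewrite -!mulmxA (mulmxA F F) flipmxK mul1mx (mulmxA X) XXt mul1mx.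
- by rewrite -!mulmxA (mulmxA F F) flipmxK mul1mx XXt mulmx1.
- rewrite -!mulmxA (mulmxA F F) flipmxK mul1mx (mulmxA X) (mulmxA (X *m F)).
  by rewrite isotropicX mul0mx mulmx0.
Qed.

End PerplecticCompletion.

Theorem lemma2p6 (C : numClosedFieldType) (n : nat) (A : 'M[C]_(n + n)) :
  A \is normalmx ->
  perhermitian A ->
  (forall a : C, eigenvalue A a -> 'Im a != 0) ->
  exists (U : 'M[C]_(n + n)) (D : 'M[C]_n),
    [/\ U \is unitarymx, perplectic U, is_diag_mx D &
        A = U *m block_mx D 0 0 (flipmx n *m D ^t* *m flipmx n) *m U ^t*].
Proof.
move=> normalA perA nonrealA.
have [X [D [unitaryX isotropicX diagD XA XAt]]] :=
  isotropic_eigenrows normalA perA nonrealA.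
have unitaryW := perplectic_completion_unitary unitaryX isotropicX.
exists ((perplectic_completion X)^t*), D; split => //.
- by rewrite trmxC_unitary.
- exact: perplectic_completion_perplectic.
- rewrite trmxCK -mulmxA -(perplectic_completion_mulmx perA XA XAt) mulmxA.
  by rewrite (mulmx1C (unitarymxP unitaryW)) mul1mx.
Qed.
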